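(* Let $N\ge 2$ and $1\le\tilde N\le N-1$ be integers. Let $\beta>0$ satisfy $(\beta+1)^{N-\tilde N-1}>\beta^{N-\tilde N+1}$, and suppose that, for all $x\in\mathcal{X}$, $$V_{\tilde N+1}^{\tilde N}(x)\le (\beta+1)\,V_{\tilde N}^{\tilde N}(x)\qquad\text{and}\qquad V_n^{\tilde N}(x)\le (\beta+1)\,l(x,\mu_n(x))\ \text{ for all } n\in\{\tilde N+1,\dots,N\}.$$ Set $\alpha=1-\frac{\beta^{N-\tilde N+1}}{(\beta+1)^{N-\tilde N-1}}$. Then for every $x\in\mathcal{X}$, $$V_N^{\tilde N}\big(f(x,\mu_N(x))\big)-V_N^{\tilde N}(x)\le -\alpha\, l\big(x,\mu_N(x)\big).$$ Hence $V_N^{\tilde N}$, which is positive definite, is a Lyapunov function for the closed-loop system $x(k+1)=f(x(k),\mu_N(x(k)))$ on $\mathcal{X}$.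
   Context: Let $\mathcal{D}\subset\mathbb{R}^n$ and $\mathcal{U}\subset\mathbb{R}^m$ be compact, and let $f:\mathcal{D}\times\mathcal{U}\to\mathcal{D}$ define the discrete-time system $x(k+1)=f(x(k),u(k))$, with $f(0,0)=0$. The stage cost $l:\mathcal{D}\times\mathcal{U}\to[0,\infty)$ is positive definite with $l(0,0)=0$. The set $\mathcal{X}\subseteq\mathcal{D}$ is control invariant: for every $x\in\mathcal{X}$ there is $u\in\mathcal{U}$ with $f(x,u)\in\mathcal{X}$. For $x\in\mathcal{X}$ write $\mathcal{U}(x)=\{u\in\mathcal{U}: f(x,u)\in\mathcal{X}\}$. Fix integers $N$ and $\tilde N$ with $0\le\tilde N\le N-1$. Define value functions on $\mathcal{X}$ recursively (dynamic programming form of the MPC problem with prediction horizon $N$ in which the state constraint $x\in\mathcal{X}$ is imposed only during the first $N-\tilde N$ steps, the last $\tilde N$ steps being unconstrained): - $V_0^{\tilde N}\equiv 0$. - For $n\in\{1,\dots,\tilde N\}$: $V_n^{\tilde N}(x)=\min_{u\in\mathcal{U}}\big[V_{n-1}^{\tilde N}(f(x,u))+l(x,u)\big]$, with $\mu_n(x)$ a minimizer. - For $n\in\{\tilde N+1,\dots,N\}$: $V_n^{\tilde N}(x)=\min_{u\in\mathcal{U}(x)}\big[V_{n-1}^{\tilde N}(f(x,u))+l(x,u)\big]$, with $\mu_n(x)$ a minimizer; in particular $f(x,\mu_n(x))\in\mathcal{X}$. All minima are assumed to be attained. The closed-loop MPC feedback is $\mu_N$. *)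

From HB Require Import structures.
From mathcomp Require Import all_boot all_order all_algebra.
From mathcomp Require Import all_classical all_reals all_analysis.
Set Implicit Arguments. Unset Strict Implicit. Unset Printing Implicit Defensive.
Import Order.TTheory GRing.Theory Num.Theory.
Import numFieldNormedType.Exports.
Local Open Scope classical_set_scope.
Local Open Scope ring_scope.

Definition adm_controls (R : realType) (nx nu : nat)
  (U : set 'rV[R]_nu) (X : set 'rV[R]_nx) (f : 'rV[R]_nx -> 'rV[R]_nu -> 'rV[R]_nx)
  (x : 'rV[R]_nx) : set 'rV[R]_nu :=
  [set u | U u /\ X (f x u)].

Definition min_attained_at (T : Type) (R : realType) (S : set T) (g : T -> R)
  (u0 : T) (v : R) : Prop :=
  S u0 /\ v = g u0 /\ (forall u, S u -> v <= g u).

(* (V, mu) are the value functions and minimizers of the dynamic programming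
   recursion of the MPC problem with horizon N whose last Nt steps are
   unconstrained.  V n for n <= Nt is needed on D (it is evaluated at f(x,u),
   which lies in D), V n for Nt < n <= N on X. *)
Definition mpc_dp (R : realType) (nx nu : nat)
  (D : set 'rV[R]_nx) (U : set 'rV[R]_nu) (X : set 'rV[R]_nx)
  (f : 'rV[R]_nx -> 'rV[R]_nu -> 'rV[R]_nx) (l : 'rV[R]_nx -> 'rV[R]_nu -> R)
  (N Nt : nat) (V : nat -> 'rV[R]_nx -> R) (mu : nat -> 'rV[R]_nx -> 'rV[R]_nu)
  : Prop :=
  (forall x, D x -> V 0%N x = 0) /\
  (forall n x, (1 <= n <= Nt)%N -> D x ->
     min_attained_at U (fun u => V n.-1 (f x u) + l x u) (mu n x) (V n x)) /\
  (forall n x, (Nt < n <= N)%N -> X x ->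
     min_attained_at (adm_controls U X f x)
       (fun u => V n.-1 (f x u) + l x u) (mu n x) (V n x)).

From HB Require Import structures.
From mathcomp Require Import all_boot all_order all_algebra.
From mathcomp Require Import all_classical all_reals all_analysis.
From mathcomp Require Import ring lra zify.
Set Implicit Arguments. Unset Strict Implicit. Unset Printing Implicit Defensive.
Import Order.TTheory GRing.Theory Num.Theory.
Import numFieldNormedType.Exports.
Local Open Scope classical_set_scope.
Local Open Scope ring_scope.

(* Write [gamma = beta / (beta + 1)].  On the constrained part of the horizon,
   [V n x <= (beta + 1) l x (mu n x)] gives [V n x - l x (mu n x) <= gamma V n x],
   and reusing the first control of the [n-1]-step optimum as a candidate for
   the [n]-step problem bounds the increment [V n - V n.-1] at [x] by the
   increment one horizon lower at the successor state.  Starting from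
   [V (Nt+1) <= (beta + 1) V Nt], induction yields
   [V n x - V n.-1 x <= beta gamma^(n-Nt-1) V n.-1 x].  At the closed-loop
   successor [y] of [x], [V N y - V N x = (V N y - V N.-1 y) - l x (mu N x)]
   with [V N.-1 y <= beta l x (mu N x)], which gives the decrease rate alpha. *)

Section ConstrainedTail.

Variables (R : realType) (nx nu : nat).
Variables (U : set 'rV[R]_nu) (X : set 'rV[R]_nx).
Variables (f : 'rV[R]_nx -> 'rV[R]_nu -> 'rV[R]_nx) (l : 'rV[R]_nx -> 'rV[R]_nu -> R).
Variables (N Nt : nat) (V : nat -> 'rV[R]_nx -> R) (mu : nat -> 'rV[R]_nx -> 'rV[R]_nu).

Hypothesis dp_tail : forall n x, (Nt < n <= N)%N -> X x ->
  min_attained_at (adm_controls U X f x)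
    (fun u => V n.-1 (f x u) + l x u) (mu n x) (V n x).

Lemma dp_tail_value n x : (Nt < n <= N)%N -> X x ->
  V n x = V n.-1 (f x (mu n x)) + l x (mu n x).
Proof. by move=> hn Xx; have [_ []] := dp_tail hn Xx. Qed.

Lemma dp_tail_succ_in n x : (Nt < n <= N)%N -> X x -> X (f x (mu n x)).
Proof. by move=> hn Xx; have [[]] := dp_tail hn Xx. Qed.

Lemma dp_tail_value_le n x u : (Nt < n <= N)%N -> X x ->
  adm_controls U X f x u -> V n x <= V n.-1 (f x u) + l x u.
Proof. by move=> hn Xx; have [_ [_]] := dp_tail hn Xx; apply. Qed.

Lemma dp_increment_le n x : (Nt.+1 < n <= N)%N -> X x ->
  V n x - V n.-1 x <= V n.-1 (f x (mu n.-1 x)) - V n.-2 (f x (mu n.-1 x)).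
Proof.
move=> hn Xx.
have hn0 : (Nt < n <= N)%N by lia.
have hn1 : (Nt < n.-1 <= N)%N by lia.
have adm_mu : adm_controls U X f x (mu n.-1 x) by have [] := dp_tail hn1 Xx.
have := dp_tail_value_le hn0 Xx adm_mu.
rewrite (dp_tail_value hn1 Xx); lra.
Qed.

Variable beta : R.
Hypothesis beta_gt0 : 0 < beta.

Lemma geometric_rate_ge0 k : 0 <= beta * (beta / (beta + 1)) ^+ k.
Proof.
have beta1_gt0 : 0 < beta + 1 by rewrite addr_gt0.
by rewrite mulr_ge0 ?exprn_ge0 ?divr_ge0 ?ltW.
Qed.

Hypothesis value_le_stage : forall n x, (Nt < n <= N)%N -> X x ->
  V n x <= (beta + 1) * l x (mu n x).

Lemma value_sub_stage_le n x : (Nt < n <= N)%N -> X x ->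
  V n x - l x (mu n x) <= beta / (beta + 1) * V n x.
Proof.
move=> hn Xx.
have beta1_gt0 : 0 < beta + 1 by rewrite addr_gt0.
have -> : beta / (beta + 1) * V n x = V n x - V n x / (beta + 1).
  by field; rewrite lt0r_neq0.
suff : V n x / (beta + 1) <= l x (mu n x) by lra.
by rewrite ler_pdivrMr // mulrC value_le_stage.
Qed.

Hypothesis value_le_first : forall x, X x -> V Nt.+1 x <= (beta + 1) * V Nt x.

Lemma dp_increment_geometric k x : (Nt.+1 + k <= N)%N -> X x ->
  V (Nt + k).+1 x - V (Nt + k) x <= beta * (beta / (beta + 1)) ^+ k * V (Nt + k) x.
Proof.
elim: k x => [|k IHk] x hk Xx.
  by rewrite addn0 expr0 mulr1; have := value_le_first Xx; lra.
rewrite addnS.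
have hn : (Nt < (Nt + k).+1 <= N)%N by lia.
have hn' : (Nt.+1 < (Nt + k).+2 <= N)%N by lia.
set z := f x (mu (Nt + k).+1 x).
have incr := dp_increment_le hn' Xx; rewrite /= -/z in incr.
have contract : V (Nt + k) z <= beta / (beta + 1) * V (Nt + k).+1 x.
  by have := value_sub_stage_le hn Xx; rewrite (dp_tail_value hn Xx) /= -/z; lra.
have IHz := IHk z (ltac:(lia)) (dp_tail_succ_in hn Xx).
have := ler_wpM2l (geometric_rate_ge0 k) contract.
rewrite exprSr -!mulrA; lra.
Qed.

End ConstrainedTail.

Theorem mainTheorem3 (R : realType) (nx nu : nat)
  (D : set 'rV[R]_nx) (U : set 'rV[R]_nu) (X : set 'rV[R]_nx)
  (f : 'rV[R]_nx -> 'rV[R]_nu -> 'rV[R]_nx) (l : 'rV[R]_nx -> 'rV[R]_nu -> R)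
  (N Nt : nat) (V : nat -> 'rV[R]_nx -> R) (mu : nat -> 'rV[R]_nx -> 'rV[R]_nu)
  (beta : R) :
  compact D -> compact U ->
  (forall x u, D x -> U u -> D (f x u)) ->
  f 0 0 = 0 ->
  (forall x u, D x -> U u -> 0 <= l x u) ->
  l 0 0 = 0 ->
  (forall x u, D x -> U u -> (x, u) <> (0, 0) -> 0 < l x u) ->
  X `<=` D ->
  (forall x, X x -> exists u, U u /\ X (f x u)) ->
  mpc_dp D U X f l N Nt V mu ->
  (2 <= N)%N -> (1 <= Nt)%N -> (Nt <= N.-1)%N ->
  0 < beta ->
  beta ^+ (N - Nt + 1) < (beta + 1) ^+ (N - Nt - 1) ->
  (forall x, X x -> V Nt.+1 x <= (beta + 1) * V Nt x) ->
  (forall n x, (Nt < n <= N)%N -> X x -> V n x <= (beta + 1) * l x (mu n x)) ->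
  let alpha := 1 - beta ^+ (N - Nt + 1) / (beta + 1) ^+ (N - Nt - 1) in
  forall x, X x ->
    V N (f x (mu N x)) - V N x <= - alpha * l x (mu N x).
Proof.
(* The bound on [beta] only makes [alpha] positive; the decrease itself does
   not need it, nor the compactness and positivity assumptions. *)
move=> _ _ _ _ _ _ _ _ _ [_ [_ dp_tail]] N_ge2 _ Nt_le_predN beta_gt0 _
  le_first le_stage alpha x Xx.
have hN : (Nt < N <= N)%N by lia.
set k := (N - Nt.+1)%N.
have hk : (Nt.+1 + k <= N)%N by lia.
have EN : (Nt + k).+1 = N by rewrite /k; lia.
set y := f x (mu N x).
have incr := dp_increment_geometric dp_tail beta_gt0 le_stage le_first hk
  (dp_tail_succ_in dp_tail hN Xx).
rewrite -/y EN (_ : (Nt + k = N.-1)%N) in incr; last by lia.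
have valN := dp_tail_value dp_tail hN Xx; rewrite -/y in valN.
have tail_le : V N.-1 y <= beta * l x (mu N x).
  by have := le_stage N x hN Xx; lra.
have Ek2 : (N - Nt + 1 = k.+2)%N by rewrite /k; lia.
have Ek : (N - Nt - 1 = k)%N by rewrite /k; lia.
have := ler_wpM2l (geometric_rate_ge0 beta_gt0 k) tail_le.
have -> : alpha = 1 - beta * (beta / (beta + 1)) ^+ k * beta.
  rewrite /alpha Ek2 Ek expr_div_n !exprS; field.
  by rewrite expf_neq0 // lt0r_neq0 // addr_gt0.
set r := beta * _ ^+ k in incr *.
(* [lra] on the full context does not finish in reasonable time. *)
move: incr valN; clear; lra.
Qed.
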